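(* Let $\mathcal{F}$ be an argumentation framework and $S\subseteq A_{\mathcal{F}}$. Suppose that whether or not $S$ is a $\mathit{cf2}$-extension of $\mathcal{F}$ is well-defined. Then $S\in\mathit{cf2}(\mathcal{F})$ if and only if $S\in\mathit{tfcf2}(\mathcal{F})$. Similarly, suppose that whether or not $S$ is a $\mathit{stg2}$-extension of $\mathcal{F}$ is well-defined. Then $S\in\mathit{stg2}(\mathcal{F})$ if and only if $S\in\mathit{tfstg2}(\mathcal{F})$.
   Context: An argumentation framework (AF) is a pair $\mathcal{F}=(A_{\mathcal{F}},R_{\mathcal{F}})$ with $R_{\mathcal{F}}\subseteq A_{\mathcal{F}}\times A_{\mathcal{F}}$ (possibly infinite); write $a\rightarrow b$ for $(a,b)\in R_{\mathcal{F}}$. For $S\subseteq A_{\mathcal{F}}$, $\mathcal{F}|_S=(A_{\mathcal{F}}\cap S,R_{\mathcal{F}}\cap(S\times S))$. $S$ is conflict-free if there are no $a,b\in S$ with $a\rightarrow b$; $cf(\mathcal{F})$ is the set of conflict-free sets. $S^+=\{x:\exists y\in S,\ y\rightarrow x\}$ and $S^\oplus=S\cup S^+$. $S$ is a naive extension if it is a $\subseteq$-maximal conflict-free set; $S$ is a stage extension if it is conflict-free and there is no conflict-free $T$ with $S^\oplus\subsetneq T^\oplus$. For $a\in A_{\mathcal{F}}$, $\mathrm{SCC}(a)$ (the strongly connected component of $a$) is the set of $b$ such that there are directed attack paths (possibly of length $0$) from $a$ to $b$ and from $b$ to $a$; $\mathrm{SCC}(\mathcal{F})$ is the set of these components. For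 $X,S\subseteq A_{\mathcal{F}}$, $D_S(X)=\{b\in X:\exists a\in S\setminus X,\ a\rightarrow b\}$. $\mathit{cf2}$: $S\in\mathit{cf2}(\mathcal{F})$ iff either $|\mathrm{SCC}(\mathcal{F})|=1$ and $S$ is naive in $\mathcal{F}$, or $|\mathrm{SCC}(\mathcal{F})|\neq 1$ and for each $X\in\mathrm{SCC}(\mathcal{F})$, $S\cap X\in\mathit{cf2}(\mathcal{F}|_{X\setminus D_S(X)})$ (the same definition applied recursively to the subframework, with attacks and components computed there). Unfolding this recursion gives a tree of recursive calls rooted at $(\mathcal{F},S)$; nodes whose framework has exactly one SCC (or is empty) are leaves. Whether $S$ is a $\mathit{cf2}$-extension is well-defined if this tree has no infinite branch; then $S\in\mathit{cf2}(\mathcal{F})$ iff at every leaf with exactly one SCC, the relevant part of $S$ is naive in that leaf's framework. $\mathit{stg2}$ is defined identically with ''stage'' in place of ''naive''. $\mathit{tfcf2}$, $\mathit{tfstg2}$: for $S\subseteq A_{\mathcal{F}}$, $a\in A_{\mathcal{F}}$ and ordinals $\alpha$ define $C^0_S(a)=\mathrm{SCC}(a)$; $C^{\alpha+1}_S(a)$ = the strongly connected component of $a$ in $\mathcal{F}|_{C^\alpha_S(a)\setminus D_S(C^\alpha_S(a))}$ (empty if $a$ is not in that set); for limit $\lambda$, $C^\lambda_S(a)$ = the strongly connected component of $a$ in $\mathcal{F}|_{\bigcap_{\alpha<\lambda}C^\alpha_S(a)}$. Let $\alpha_S(a)$ be the least $\alpha$ with $a\notin C^\alpha_S(a)$ or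 $C^{\alpha+1}_S(a)=C^\alpha_S(a)$. Then $S\in\mathit{tfcf2}(\mathcal{F})$ iff $S\in cf(\mathcal{F})$ and for each $a\in A_{\mathcal{F}}$, either $a\notin C^{\alpha_S(a)}_S(a)$ or $S\cap C^{\alpha_S(a)}_S(a)$ is a naive extension of $\mathcal{F}|_{C^{\alpha_S(a)}_S(a)}$; $\mathit{tfstg2}$ is the same with ''stage extension'' in place of ''naive extension''. *)

From Stdlib Require Import Relations.
From mathcomp Require Import all_boot.
From mathcomp Require Import boolp classical_sets.

Set Implicit Arguments.
Unset Strict Implicit.
Unset Printing Implicit Defensive.
Local Open Scope classical_set_scope.

Section AF.
Variable T : Type.

Record AF := mkAF { args : set T; att : T -> T -> Prop }.

Definition wf_AF (F : AF) : Prop :=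
  forall x y, att F x y -> args F x /\ args F y.

Definition restrict (F : AF) (S : set T) : AF :=
  mkAF (args F `&` S) (fun x y => att F x y /\ S x /\ S y).

Definition conflict_free (F : AF) (S : set T) : Prop :=
  S `<=` args F /\ forall a b, S a -> S b -> ~ att F a b.

Definition splus (F : AF) (S : set T) : set T :=
  [set x | exists y, S y /\ att F y x].

Definition srange (F : AF) (S : set T) : set T := S `|` splus F S.

Definition naive (F : AF) (S : set T) : Prop :=
  conflict_free F S /\
  forall U, conflict_free F U -> S `<=` U -> U = S.

Definition stage (F : AF) (S : set T) : Prop :=
  conflict_free F S /\
  ~ (exists U, conflict_free F U /\
       srange F S `<=` srange F U /\ srange F S <> srange F U).

Definition reach (F : AF) : T -> T -> Prop := clos_refl_trans T (att F).

Definition scc (F : AF) (a : T) : set T :=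
  [set b | args F a /\ reach F a b /\ reach F b a].

Definition sccs (F : AF) : set (set T) :=
  [set X | exists a, args F a /\ X = scc F a].

Definition one_scc (F : AF) : Prop := exists X, sccs F = [set X].

Definition Dset (F : AF) (S X : set T) : set T :=
  [set b | X b /\ exists a, S a /\ ~ X a /\ att F a b].

(** Nodes of the tree of recursive calls: (framework, relevant part of S). *)
Definition node := (AF * set T)%type.

Definition child (n m : node) : Prop :=
  ~ one_scc n.1 /\
  exists X, sccs n.1 X /\
    m = (restrict n.1 (X `\` Dset n.1 n.2 X), n.2 `&` X).

Inductive reachable (r : node) : node -> Prop :=
| reach_refl : reachable r r
| reach_step : forall n m, reachable r n -> child n m -> reachable r m.

(** Whether S ∈ cf2(F) (resp. stg2) is well-defined: the tree of recursive
    calls rooted at (F, S) has no infinite branch. *)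
Definition rec_well_defined (F : AF) (S : set T) : Prop :=
  ~ (exists f : nat -> node, f 0 = (F, S) /\ forall k, child (f k) (f k.+1)).

(** S ∈ sem2(F): at every node of the recursion tree the relevant part of S
    is a set of arguments of that node's framework (extensions are subsets of
    the arguments), and at every leaf with exactly one SCC it is a
    [sem]-extension of the leaf's framework. *)
Definition rec2 (sem : AF -> set T -> Prop) (F : AF) (S : set T) : Prop :=
  forall G S', reachable (F, S) (G, S') ->
    S' `<=` args G /\ (one_scc G -> sem G S').

Definition cf2 := rec2 naive.
Definition stg2 := rec2 stage.

(** Ordinal indices are represented by (initial segments of) arbitrary
    well-orders: a type I with a well-founded strict total order. *)
Definition well_order (I : Type) (lt : I -> I -> Prop) : Prop :=
  well_founded lt /\
  (forall x y z, lt x y -> lt y z -> lt x z) /\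
  (forall x y, lt x y \/ x = y \/ lt y x).

Definition is_pred (I : Type) (lt : I -> I -> Prop) (j i : I) : Prop :=
  lt j i /\ forall k, lt k i -> k = j \/ lt k j.

Definition is_limit (I : Type) (lt : I -> I -> Prop) (i : I) : Prop :=
  (exists j, lt j i) /\ ~ (exists j, is_pred lt j i).

Definition tf_step (F : AF) (S : set T) (a : T) (X : set T) : set T :=
  scc (restrict F (X `\` Dset F S X)) a.

(** C : I -> set T is the sequence (C^α_S(a))_α along the well-order (I, lt). *)
Definition tf_seq (F : AF) (S : set T) (a : T)
    (I : Type) (lt : I -> I -> Prop) (C : I -> set T) : Prop :=
  (forall i, (forall j, ~ lt j i) -> C i = scc F a) /\
  (forall i j, is_pred lt j i -> C i = tf_step F S a (C j)) /\
  (forall i, is_limit lt i ->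
     C i = scc (restrict F [set x | forall j, lt j i -> C j x]) a).

Definition tf_stop (F : AF) (S : set T) (a : T) (X : set T) : Prop :=
  ~ X a \/ tf_step F S a X = X.

Definition tf2 (sem : AF -> set T -> Prop) (F : AF) (S : set T) : Prop :=
  conflict_free F S /\
  forall a, args F a ->
    exists (I : Type) (lt : I -> I -> Prop) (C : I -> set T) (i : I),
      well_order lt /\ tf_seq F S a lt C /\
      tf_stop F S a (C i) /\ (forall j, lt j i -> ~ tf_stop F S a (C j)) /\
      (~ C i a \/ sem (restrict F (C i)) (S `&` C i)).

Definition tfcf2 := tf2 naive.
Definition tfstg2 := tf2 stage.

End AF.

From Stdlib Require Import Relations Wf_nat Inclusion.
From mathcomp Require Import all_boot.
From mathcomp Require Import boolp classical_sets.
Local Open Scope classical_set_scope.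

(* Followed along one argument a, the recursion tree of cf2 (or stg2) runs
   through the stages of the transfinite sequence: the recursive call for the
   component containing a in F|_{C^k \ D_S(C^k)} is the call for C^{k+1}_S(a).
   Conversely, every node of the tree is the call for C^k_S(c), for each
   argument c it still contains, at a stage k before the sequence of c stops.
   A leaf with a single SCC is exactly a stage where the sequence stops with a
   still present, and there both semantics require S ∩ C^k to be a naive
   (stage) extension of F|_{C^k}.  As the tree has no infinite branch, every
   sequence stops at a finite stage, so limit stages never matter.  The same
   branch argument gives conflict-freeness: an attack a → b inside S would
   keep a and b together in every stage of b, never reaching a leaf. *)

Set Implicit Arguments.
Unset Strict Implicit.
Unset Printing Implicit Defensive.

Section WellOrder.
Variables (I : Type) (lt : I -> I -> Prop).

Lemma well_founded_min (P : I -> Prop) x : well_founded lt -> P x ->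
  exists y, P y /\ forall z, lt z y -> ~ P z.
Proof.
move=> wf_lt Px; apply: contrapT => nomin.
suff : forall y, ~ P y by move/(_ x).
apply: (well_founded_ind wf_lt) => y IH Py.
by apply: nomin; exists y.
Qed.

Hypothesis wo : well_order lt.

Lemma well_order_bottom i : exists2 b, b = i \/ lt b i & forall j, ~ lt j b.
Proof.
have [wf_lt [_ total]] := wo.
have [b [_ minb]] := well_founded_min (P := fun _ => True) (x := i) wf_lt Logic.I.
exists b => [|j jb]; last exact: minb jb Logic.I.
by case: (total b i) => [|[|/minb]]; [right | left | ].
Qed.

Lemma well_order_succ j i : lt j i -> exists2 s, s = i \/ lt s i & is_pred lt j s.
Proof.
have [wf_lt [_ total]] := wo.
move=> ji; have [s [js mins]] := well_founded_min wf_lt ji.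
exists s; first by case: (total s i) => [|[|/mins]]; [right | left | ].
split=> // k ks.
by case: (total k j) => [|[|/(mins _ ks)]]; [right | left | ].
Qed.

End WellOrder.

Lemma well_order_ltn : well_order (fun m n : nat => (m < n)%N).
Proof.
split; first by apply: (wf_incl _ _ _ _ lt_wf) => m n /ltP.
split; first by move=> m n p; exact: ltn_trans.
by move=> m n; case: (ltngtP m n); [left | right; right | right; left].
Qed.

Section Framework.
Variable T : Type.
Implicit Types (G : AF T) (A B X : set T).

Lemma restrictI G A B : restrict (restrict G A) B = restrict G (A `&` B).
Proof.
rewrite /restrict /= setIA; congr mkAF.
by apply/funext => x; apply/funext => y; apply/propext; split;
  [move=> [[? [? ?]] [? ?]] | move=> [? [[? ?] [? ?]]]].
Qed.

Lemma restrict_args G : wf_AF G -> restrict G (args G) = G.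
Proof.
case: G => A R wfG; rewrite /restrict /= setIid; congr mkAF.
by apply/funext => x; apply/funext => y; apply/propext; split=> [[] | /[dup] /wfG].
Qed.

Lemma wf_restrict G A : wf_AF G -> wf_AF (restrict G A).
Proof. by move=> wfG x y [/wfG [? ?] [? ?]]. Qed.

Lemma reach_args G a b : wf_AF G -> reach G a b -> args G a -> args G b.
Proof. by move=> wfG; elim=> // [x y /wfG [] | x y z _ IHxy _ IHyz /IHxy /IHyz]. Qed.

Lemma scc_sub_args G a : wf_AF G -> scc G a `<=` args G.
Proof. by move=> wfG b [aG [ab _]]; exact: reach_args ab aG. Qed.

Lemma scc_refl G a : args G a -> scc G a a.
Proof. by split=> //; split; exact: rt_refl. Qed.

Lemma scc_eq G a b : wf_AF G -> scc G a b -> scc G b = scc G a.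
Proof.
move=> wfG /[dup] /(scc_sub_args wfG) bG [aG [ab ba]].
apply/seteqP; split=> c [_ [bc cb]]; do !split=> //.
- exact: rt_trans ab bc.
- exact: rt_trans cb ba.
- exact: rt_trans ba bc.
- exact: rt_trans cb ab.
Qed.

Lemma sccs_sub_args G X : wf_AF G -> sccs G X -> X `<=` args G.
Proof. by move=> wfG [a [_ ->]]; exact: scc_sub_args. Qed.

Lemma sccs_scc G X c : wf_AF G -> sccs G X -> X c -> X = scc G c.
Proof. by move=> wfG [a [_ ->]] /(scc_eq wfG) ->. Qed.

Lemma one_scc_args G : one_scc G -> exists a, args G a.
Proof.
case=> X EX; have [a [aG _]] : sccs G X by rewrite EX.
by exists a.
Qed.

Lemma one_sccP G a : wf_AF G -> args G a -> one_scc G <-> args G `<=` scc G a.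
Proof.
move=> wfG aG; split=> [[X EX] b bG | sub_a].
  have : sccs G (scc G b) by exists b.
  have : sccs G (scc G a) by exists a.
  by rewrite EX => /= -> <-; exact: scc_refl.
exists (scc G a); apply/seteqP; split=> [X [b [bG ->]] | X ->]; last by exists a.
by apply: scc_eq => //; exact: sub_a.
Qed.

End Framework.

Section Recursion.
Variables (T : Type) (F : AF T) (S : set T).
Hypotheses (wfF : wf_AF F) (SF : S `<=` args F).
Implicit Types (X Z : set T) (a c : T).

Definition undefeated Z := Z `\` Dset F S Z.

Definition rec_call Z : node T := (restrict F (undefeated Z), S `&` Z).

(* [tf_chain a k.+1] is C^k_S(a): the chain starts one step earlier, at A_F. *)
Definition tf_chain a k := iter k (tf_step F S a) (args F).

Definition stop_free a k :=
  forall q, (q < k)%N -> ~ tf_stop F S a (tf_chain a q.+1).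

Definition first_stop a p := tf_stop F S a (tf_chain a p.+1) /\ stop_free a p.

Lemma tf_stepE a Z : tf_step F S a Z = scc (restrict F (undefeated Z)) a.
Proof. by []. Qed.

Lemma undefeated_sub Z : undefeated Z `<=` Z.
Proof. by move=> x []. Qed.

Lemma undefeated_args : undefeated (args F) = args F.
Proof.
apply/seteqP; split=> [x [] // | x xF]; split=> // -[_ [a [Sa [naF _]]]].
exact: naF (SF Sa).
Qed.

Lemma rec_call_args : rec_call (args F) = (F, S).
Proof. by rewrite /rec_call undefeated_args restrict_args // setIidl. Qed.

Lemma tf_step_sub a Z : tf_step F S a Z `<=` undefeated Z.
Proof. by move=> x /(scc_sub_args (wf_restrict wfF)) []. Qed.

Lemma tf_chainS a k : tf_chain a k.+1 = tf_step F S a (tf_chain a k).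
Proof. by []. Qed.

Lemma tf_chain_args a k : tf_chain a k `<=` args F.
Proof. by elim: k => [|k IH] //= x /tf_step_sub /undefeated_sub /IH. Qed.

Lemma tf_chain1 a : tf_chain a 1 = scc F a.
Proof. by rewrite /tf_chain /= tf_stepE undefeated_args restrict_args. Qed.

Lemma undefeated_conflict_free Z : conflict_free F S -> S `&` Z `<=` undefeated Z.
Proof.
by move=> [_ cfS] x [Sx Zx]; split=> // -[_ [a [Sa [_ ax]]]]; exact: cfS ax.
Qed.

Lemma undefeated_idem Z :
  S `&` Z `<=` undefeated Z -> undefeated (undefeated Z) = undefeated Z.
Proof.
move=> SZ; apply/seteqP; split=> [x [] // | x [Zx nDx]].
split=> // -[_ [a [Sa [nUa ax]]]].
have [Za | nZa] := pselect (Z a); first exact: nUa (SZ a (conj Sa Za)).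
by apply: nDx; split=> //; exists a.
Qed.

Lemma setI_undefeated Z : S `&` Z `<=` undefeated Z -> S `&` undefeated Z = S `&` Z.
Proof.
move=> SZ; apply/seteqP; split=> x [Sx Zx]; split=> //.
  exact: undefeated_sub.
exact: SZ.
Qed.

Lemma Dset_rec_call Z X : S `&` Z `<=` undefeated Z -> X `<=` undefeated Z ->
  Dset (rec_call Z).1 (rec_call Z).2 X = Dset F S X.
Proof.
move=> SZ XZ; apply/seteqP; split=> b [Xb [a Da]]; split=> //; exists a.
  by case: Da => [[Sa _] [nXa [ab _]]].
case: Da => Sa [nXa ab].
have Za : Z a.
  apply: contrapT => nZa; have [_ nDb] := XZ b Xb.
  by apply: nDb; split; [exact: undefeated_sub (XZ b Xb) | exists a].
have [_ nDa] := SZ a (conj Sa Za); have [Zb nDb] := XZ b Xb.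
by do !split.
Qed.

Lemma rec_call_child Z X : S `&` Z `<=` undefeated Z -> X `<=` undefeated Z ->
  (restrict (rec_call Z).1 (X `\` Dset (rec_call Z).1 (rec_call Z).2 X),
   (rec_call Z).2 `&` X) = rec_call X.
Proof.
move=> SZ XZ; rewrite Dset_rec_call // restrictI /rec_call /=.
congr pair; first by rewrite setIidr // => x [/XZ].
by rewrite -setIA (setIidr (_ : X `<=` Z)) // => x /XZ /undefeated_sub.
Qed.

Lemma child_tf_step Z a : S `&` Z `<=` undefeated Z -> Z `<=` args F ->
  undefeated Z a -> ~ one_scc (restrict F (undefeated Z)) ->
  child (rec_call Z) (rec_call (tf_step F S a Z)).
Proof.
move=> SZ ZF Za not_one; split=> //; exists (tf_step F S a Z); split.
  by exists a; split=> //; split=> //; exact: ZF (undefeated_sub Za).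
by rewrite rec_call_child //; exact: tf_step_sub.
Qed.

Lemma tf_chain_branch a : rec_well_defined F S ->
  ~ (forall k, child (rec_call (tf_chain a k)) (rec_call (tf_chain a k.+1))).
Proof.
move=> wd branch; apply: wd; exists (fun k => rec_call (tf_chain a k)).
by split; [exact: rec_call_args | exact: branch].
Qed.

Lemma tf_step_one_scc Z a : Z `<=` args F -> undefeated Z a ->
  one_scc (restrict F (undefeated Z)) -> tf_step F S a Z = undefeated Z.
Proof.
move=> ZF Za; have aZ : args (restrict F (undefeated Z)) a.
  by split=> //; exact: ZF (undefeated_sub Za).
move=> /(one_sccP (wf_restrict wfF) aZ) sub_a.
apply/seteqP; split=> [|x Ux]; first exact: tf_step_sub.
by apply: sub_a; split=> //; exact: ZF (undefeated_sub Ux).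
Qed.

Lemma one_scc_tf_stop Z a : S `&` Z `<=` undefeated Z -> Z `<=` args F ->
  undefeated Z a -> one_scc (restrict F (undefeated Z)) ->
  tf_stop F S a (tf_step F S a Z).
Proof.
move=> SZ ZF Za one; right; rewrite (tf_step_one_scc ZF Za one).
by rewrite tf_stepE undefeated_idem // -tf_stepE; exact: tf_step_one_scc.
Qed.

Lemma tf_step_fixed X a : X `<=` args F -> X a -> tf_step F S a X = X ->
  undefeated X = X /\ one_scc (restrict F X).
Proof.
move=> XF Xa fixed.
have UX : undefeated X = X.
  apply/seteqP; split=> [|x]; first exact: undefeated_sub.
  by rewrite -{1}fixed; exact: tf_step_sub.
split=> //; apply/(one_sccP (wf_restrict wfF) (conj (XF a Xa) Xa)).
by move=> x [_ Xx]; move: fixed; rewrite tf_stepE UX => ->.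
Qed.

Lemma stop_freeS a k : stop_free a k -> ~ tf_stop F S a (tf_chain a k.+1) ->
  stop_free a k.+1.
Proof. by move=> free nstop q; rewrite ltnS leq_eqVlt => /orP [/eqP -> | /free]. Qed.

Lemma stop_free_first_stop a k : stop_free a k.-1 ->
  tf_stop F S a (tf_chain a k.+1) -> tf_chain a k a ->
  exists p, first_stop a p /\ tf_chain a p.+1 = tf_chain a k.+1.
Proof.
case: k => [|k] /= free stop ak; first by exists 0%N; do !split=> // q.
have [[nak | fixed] | nstop] := pselect (tf_stop F S a (tf_chain a k.+1)).
- by case: (nak ak).
- by exists k; split; [split=> //; right | apply: esym].
- by exists k.+1; split=> //; split=> //; exact: stop_freeS.
Qed.

Lemma tf_seq_tf_chain a :
  tf_seq F S a (fun m n => (m < n)%N) (fun k => tf_chain a k.+1).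
Proof.
split; first by case=> [_ | k /(_ k (ltnSn k))//]; exact: tf_chain1.
split=> [i j [ji predj] | i [[j ji] not_succ]].
  case: i ji predj => // i ji /(_ i (ltnSn i)) [-> // | ij].
  by rewrite ltnS in ji; move: (leq_trans ij ji); rewrite ltnn.
case: i ji not_succ => // i _ []; exists i; split=> // k.
by rewrite ltnS leq_eqVlt => /orP [/eqP -> | ki]; [left | right].
Qed.

Lemma tf_seq_tf_chain_le a (I : Type) (lt : I -> I -> Prop) (C : I -> set T) i :
  well_order lt -> tf_seq F S a lt C -> tf_stop F S a (C i) ->
  (forall j, lt j i -> ~ tf_stop F S a (C j)) ->
  forall p, stop_free a p -> exists2 j, j = i \/ lt j i & C j = tf_chain a p.+1.
Proof.
move=> wo [C0 [Csucc _]] stopi free_i; elim=> [_ | p IH freep].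
  have [b bi botb] := well_order_bottom wo i.
  by exists b => //; rewrite C0 // tf_chain1.
have [j ji Cj] := IH (fun q qp => freep q (ltnW qp)).
have nstop : ~ tf_stop F S a (C j) by rewrite Cj; exact: freep.
have {}ji : lt j i by case: ji => // eji; rewrite eji in nstop.
have [s si preds] := well_order_succ wo ji.
by exists s => //; rewrite (Csucc s j) // Cj.
Qed.

Lemma tf_seq_first_stop a (I : Type) (lt : I -> I -> Prop) (C : I -> set T) i p :
  well_order lt -> tf_seq F S a lt C -> tf_stop F S a (C i) ->
  (forall j, lt j i -> ~ tf_stop F S a (C j)) -> first_stop a p ->
  C i = tf_chain a p.+1.
Proof.
move=> wo seqC stopi free_i [stopp freep].
have [j [-> // | ji] Cj] := tf_seq_tf_chain_le wo seqC stopi free_i freep.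
by case: (free_i j ji); rewrite Cj.
Qed.

Variable sem : AF T -> set T -> Prop.

Lemma rec2_undefeated Z : rec2 sem F S -> reachable (F, S) (rec_call Z) ->
  S `&` Z `<=` undefeated Z.
Proof. by move=> recS /recS [sub _] x /sub []. Qed.

Lemma rec2_conflict_free : (forall G S', sem G S' -> conflict_free G S') ->
  rec_well_defined F S -> rec2 sem F S -> conflict_free F S.
Proof.
move=> sem_cf wd recS; split=> // a b Sa Sb ab.
pose node_ok k := reachable (F, S) (rec_call (tf_chain b k)) /\
  undefeated (tf_chain b k) a /\ undefeated (tf_chain b k) b.
have step k : node_ok k ->
    child (rec_call (tf_chain b k)) (rec_call (tf_chain b k.+1)).
  move=> [R [Ua Ub]]; rewrite tf_chainS.
  apply: (child_tf_step (rec2_undefeated recS R) (@tf_chain_args b k) Ub).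
  move=> /(recS _ _ R).2 /sem_cf [_ cf].
  exact: cf a b (conj Sa Ua.1) (conj Sb Ub.1) (conj ab (conj Ua Ub)).
have ok k : node_ok k.
  elim: k => [|k okk].
    rewrite /node_ok /= undefeated_args rec_call_args.
    by split; [exact: reach_refl | split; exact: SF].
  have R' := reach_step okk.1 (step k okk).
  have SX := rec2_undefeated recS R'.
  have Xb : tf_chain b k.+1 b.
    by apply: scc_refl; split; [exact: SF | exact: okk.2.2].
  have Xa : tf_chain b k.+1 a.
    apply: contrapT => nXa; have [_ nDb] := SX b (conj Sb Xb).
    by apply: nDb; split=> //; exists a.
  by split=> //; split; apply: SX.
by apply: (@tf_chain_branch b wd) => k; exact: step.
Qed.

Section ConflictFree.
Hypothesis cfS : conflict_free F S.

Lemma child_tf_chain a k : ~ tf_stop F S a (tf_chain a k.+1) ->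
  child (rec_call (tf_chain a k)) (rec_call (tf_chain a k.+1)).
Proof.
move=> nstop; have ak : tf_chain a k.+1 a by apply: contrapT => na; apply: nstop; left.
have Ua : undefeated (tf_chain a k) a := tf_step_sub ak.
have SZ := @undefeated_conflict_free (tf_chain a k) cfS.
rewrite tf_chainS; apply: (child_tf_step SZ (@tf_chain_args a k) Ua).
by move=> one; apply: nstop; exact: one_scc_tf_stop (@tf_chain_args a k) Ua one.
Qed.

Lemma reachable_tf_chain a k : stop_free a k ->
  reachable (F, S) (rec_call (tf_chain a k)).
Proof.
elim: k => [_ | k IH free]; first by rewrite rec_call_args; exact: reach_refl.
apply: reach_step (IH _) (child_tf_chain _); last exact: free.
by move=> q /ltnW; exact: free.
Qed.

Lemma first_stop_exists a : rec_well_defined F S -> exists p, first_stop a p.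
Proof.
move=> wd; have [k stopk] : exists k, tf_stop F S a (tf_chain a k.+1).
  apply: contrapT => nostop; apply: (@tf_chain_branch a wd) => k.
  by apply: child_tf_chain => stopk; apply: nostop; exists k.
have [p [stopp minp]] :=
  well_founded_min (P := fun k => tf_stop F S a (tf_chain a k.+1))
    (proj1 well_order_ltn) stopk.
by exists p; split=> // q /minp.
Qed.

Lemma reachable_rec_call n : reachable (F, S) n ->
  exists Z, n = rec_call Z /\ Z `<=` args F /\
    forall c, undefeated Z c -> exists2 k, Z = tf_chain c k & stop_free c k.-1.
Proof.
elim=> [|_ _ _ [Z [-> [ZF chainZ]]] [not_one [X [sccX ->]]]].
  exists (args F); split; first by rewrite rec_call_args.
  by split=> // c _; exists 0%N.
have wfZ := wf_restrict (A := undefeated Z) wfF.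
have XZ : X `<=` undefeated Z := fun x Xx => (sccs_sub_args wfZ sccX Xx).2.
rewrite rec_call_child //; last exact: undefeated_conflict_free.
exists X; split=> //; split=> [x /XZ /undefeated_sub /ZF // | c /undefeated_sub Xc].
have [k EZ freek] := chainZ c (XZ c Xc).
have EX : X = tf_step F S c Z by rewrite (sccs_scc wfZ sccX Xc).
exists k.+1; first by rewrite EX EZ.
case: k EZ freek => [_ _ q | k EZ freek]; first by rewrite ltn0.
apply: stop_freeS => // -[nZc | fixed].
  by apply: nZc; rewrite -EZ; exact: undefeated_sub (XZ c Xc).
apply: not_one; apply/(one_sccP wfZ (conj (ZF c (undefeated_sub (XZ c Xc))) (XZ c Xc))).
by move=> x [_ /undefeated_sub]; rewrite EZ -{1}fixed -EZ.
Qed.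

Lemma rec2_leaf_sem Z : rec2 sem F S -> reachable (F, S) (rec_call Z) ->
  one_scc (restrict F (undefeated Z)) ->
  sem (restrict F (undefeated Z)) (S `&` undefeated Z).
Proof.
move=> recS /recS [_ semZ] /semZ.
by rewrite setI_undefeated //; exact: undefeated_conflict_free.
Qed.

Lemma rec2_first_stop_sem a m : rec2 sem F S -> first_stop a m ->
  tf_chain a m.+1 a -> sem (restrict F (tf_chain a m.+1)) (S `&` tf_chain a m.+1).
Proof.
move=> recS [stopm freem] am.
have fixed : tf_step F S a (tf_chain a m.+1) = tf_chain a m.+1.
  by case: stopm => // /(_ am).
have [UX oneX] := tf_step_fixed (@tf_chain_args a m.+1) am fixed.
have R := reachable_tf_chain freem.
have Ua : undefeated (tf_chain a m) a := tf_step_sub am.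
have [one | not_one] := pselect (one_scc (restrict F (undefeated (tf_chain a m)))).
  rewrite [tf_chain a m.+1](tf_step_one_scc (@tf_chain_args a m) Ua one).
  exact: rec2_leaf_sem R one.
have R' : reachable (F, S) (rec_call (tf_chain a m.+1)).
  apply: reach_step R (child_tf_step _ (@tf_chain_args a m) Ua not_one).
  exact: undefeated_conflict_free.
by have := rec2_leaf_sem recS R'; rewrite UX; apply.
Qed.

End ConflictFree.

Lemma tf2_rec2 : tf2 sem F S -> rec2 sem F S.
Proof.
move=> [cfS tfS] G S' /(reachable_rec_call cfS) [Z [[-> ->] [ZF chainZ]]].
have SZ := @undefeated_conflict_free Z cfS.
split=> [x Zx | one]; first by split; [exact: SF Zx.1 | exact: SZ].
have [a [_ Za]] := one_scc_args one.
have [k EZ freek] := chainZ a Za.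
have EU : tf_chain a k.+1 = undefeated Z.
  by rewrite tf_chainS -EZ; exact: tf_step_one_scc.
have stopk : tf_stop F S a (tf_chain a k.+1).
  by rewrite tf_chainS -EZ; exact: one_scc_tf_stop.
have ak : tf_chain a k a by rewrite -EZ; exact: undefeated_sub Za.
have [p [firstp Ep]] := stop_free_first_stop freek stopk ak.
have [I [lt [C [i [wo [seqC [stopi [free_i semi]]]]]]]] := tfS a (ZF a (undefeated_sub Za)).
have Ci : C i = undefeated Z.
  by rewrite (tf_seq_first_stop wo seqC stopi free_i firstp) Ep.
rewrite -setI_undefeated //; case: semi; rewrite Ci // => /(_ Za) [].
Qed.

Lemma rec2_tf2 : (forall G S', sem G S' -> conflict_free G S') ->
  rec_well_defined F S -> rec2 sem F S -> tf2 sem F S.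
Proof.
move=> sem_cf wd recS; have cfS := rec2_conflict_free sem_cf wd recS.
split=> // a _; have [m firstm] := first_stop_exists cfS a wd.
exists nat, (fun m n => (m < n)%N), (fun k => tf_chain a k.+1), m.
have [stopm freem] := firstm.
split; first exact: well_order_ltn.
split; first exact: tf_seq_tf_chain.
do 2!split=> //.
have [am | nam] := pselect (tf_chain a m.+1 a); last by left.
by right; exact: rec2_first_stop_sem.
Qed.

End Recursion.

Theorem theorem1 (T : Type) (F : AF T) (S : set T) :
  wf_AF F -> S `<=` args F ->
  (rec_well_defined F S -> (cf2 F S <-> tfcf2 F S)) /\
  (rec_well_defined F S -> (stg2 F S <-> tfstg2 F S)).
Proof.
move=> wfF SF; split=> wd; split.
- by apply: rec2_tf2 => // G S' [].
- exact: tf2_rec2.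
- by apply: rec2_tf2 => // G S' [].
- exact: tf2_rec2.
Qed.
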